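(* Let $\mathcal{G}$ be a hereditary and multiplicative graph family with $\mathcal{G}_n\ne\emptyset$ for all $n$, let $r\geq 2$ and $0\leq \alpha\leq 1-\frac{1}{r}$. Suppose that $\lambda_{\alpha}(\mathcal{G}_n)>\left(1-\frac{1}{r}\right)n-\left(1-\frac{1}{r}\right)$ for all sufficiently large $n$. Then for every $n\ge1$ and every $G\in \mathcal{G}_n$, $$\lambda_{\alpha}(G)\leq \pi_{\alpha}(\mathcal{G})\,n,$$ where $\pi_\alpha(\mathcal{G})=\lim_{n\to\infty}\lambda_\alpha(\mathcal{G}_n)/n$ (which exists under these hypotheses).
   Context: $\lambda_\alpha(G)$ is the largest eigenvalue of $A_\alpha(G)=\alpha D(G)+(1-\alpha)A(G)$ ($A$ adjacency matrix, $D$ diagonal degree matrix). $\mathcal{G}_n$ is the set of $n$-vertex graphs in $\mathcal{G}$ and $\lambda_\alpha(\mathcal{G}_n)=\max_{G\in\mathcal{G}_n}\lambda_\alpha(G)$. A family is hereditary if closed under taking induced subgraphs. The blow-up $G^p$ of $G$ replaces each vertex by $p$ independent vertices and each edge by a complete bipartite graph $K_{p,p}$; a family $\mathcal{G}$ is multiplicative if $G\in\mathcal{G}$ implies $G^p\in\mathcal{G}$ for all integers $p\ge1$. *)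

From HB Require Import structures.
From mathcomp Require Import all_boot all_order all_algebra.
From mathcomp Require Import all_classical all_reals all_analysis.
Set Implicit Arguments. Unset Strict Implicit. Unset Printing Implicit Defensive.
Import Order.TTheory GRing.Theory Num.Theory numFieldNormedType.Exports.
Local Open Scope classical_set_scope.
Local Open Scope ring_scope.

Definition simple_graph (n : nat) (e : rel 'I_n) : Prop :=
  irreflexive e /\ symmetric e.

Definition graph_family := forall n : nat, rel 'I_n -> Prop.

Definition inG (F : graph_family) (n : nat) (e : rel 'I_n) : Prop :=
  simple_graph e /\ F n e.

(* hereditary_family: closed under induced subgraphs (any injective relabelling,
   hence also closed under isomorphism) *)
Definition hereditary_family (F : graph_family) : Prop :=
  forall (m n : nat) (f : 'I_m -> 'I_n), injective f ->
  forall e : rel 'I_n, inG F e -> inG F (fun i j => e (f i) (f j)).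

Lemma blow_proj_subproof (n p : nat) (x : 'I_(n * p)) : (x %/ p < n)%N.
Proof.
case: p x => [|p] x; first by case: x => x; rewrite muln0.
by rewrite ltn_divLR // ltn_ord.
Qed.

Definition blow_proj (n p : nat) (x : 'I_(n * p)) : 'I_n :=
  Ordinal (blow_proj_subproof x).

(* the blow-up G^p: each vertex replaced by p independent vertices, each edge
   by a complete bipartite graph K_{p,p} *)
Definition blowup (n : nat) (e : rel 'I_n) (p : nat) : rel 'I_(n * p) :=
  fun x y => e (blow_proj x) (blow_proj y).

Definition multiplicative_family (F : graph_family) : Prop :=
  forall (n p : nat) (e : rel 'I_n), (0 < p)%N -> inG F e ->
  inG F (@blowup n e p).

Definition adj_mx (R : realType) (n : nat) (e : rel 'I_n) : 'M[R]_n :=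
  \matrix_(i, j) (e i j)%:R.

Definition deg_mx (R : realType) (n : nat) (e : rel 'I_n) : 'M[R]_n :=
  diag_mx (\row_i (#|[set j | e i j]|)%:R).

Definition A_alpha (R : realType) (alpha : R) (n : nat) (e : rel 'I_n) : 'M[R]_n :=
  alpha *: deg_mx R e + (1 - alpha) *: adj_mx R e.

Definition lambda_max (R : realType) (n : nat) (M : 'M[R]_n) : R :=
  sup [set a : R | eigenvalue M a].

Definition lam (R : realType) (alpha : R) (n : nat) (e : rel 'I_n) : R :=
  lambda_max (A_alpha alpha e).

Definition lamF (R : realType) (F : graph_family) (alpha : R) (n : nat) : R :=
  sup [set lam alpha e | e in [set e : rel 'I_n | inG F e]].

Definition pi_alpha (R : realType) (F : graph_family) (alpha : R) : R :=
  limn (fun n : nat => lamF F alpha n / n%:R).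

(* lambda_alpha(G) is the maximum of the Rayleigh quotient x A_alpha x^T / |x|^2
   over x != 0, attained at a top eigenvector.  For G in G_n and q n <= m, the
   graph on m vertices in which vertex y plays the role of vertex y mod n is an
   induced subgraph of the blow-up G^m, hence lies in G_m; evaluating its
   quadratic form at the top eigenvector of G repeated q times (and padded with
   zeros) gives lambda_alpha(G_m) >= q lambda_alpha(G_n).  Hence
   u_n = lambda_alpha(G_n) / n satisfies u_m >= u_n - 2n/m for n <= m; since
   u_n <= 2, u converges to its supremum, which therefore bounds every
   lambda_alpha(G) / n. *)

From HB Require Import structures.
From mathcomp Require Import all_boot all_order all_algebra.
From mathcomp Require Import all_classical all_reals all_analysis.
From mathcomp Require Import zify.
Import Order.TTheory GRing.Theory Num.Theory numFieldNormedType.Exports.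
Local Open Scope classical_set_scope.
Local Open Scope ring_scope.
Set Implicit Arguments. Unset Strict Implicit. Unset Printing Implicit Defensive.

Lemma lincoef_le0 (R : realFieldType) (a b : R) :
  (forall t, 0 < t -> t * a + t ^+ 2 * b <= 0) -> a <= 0.
Proof.
move=> H; rewrite leNgt; apply/negP => a0.
have b1 : 0 < `|b| + 1 by rewrite ltr_pwDr ?ltr01.
pose t := a / (`|b| + 1).
have t0 : 0 < t by rewrite divr_gt0.
have bb : 0 <= `|b| + b by rewrite -[X in _ + X]opprK subr_ge0 ler_normr lexx orbT.
have := H t t0; rewrite expr2 -mulrA -mulrDr pmulr_rle0 //; apply/negP.
rewrite -ltNge -{1}[a](divfK (lt0r_neq0 b1)) -/t mulrDr mulr1 addrAC -mulrDr.
by apply: (lt_le_trans t0); rewrite lerDr (mulr_ge0 (ltW t0) bb).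
Qed.

Section QuadraticForm.
Variable R : realType.
Implicit Types (n : nat).

Definition mxform n (M : 'M[R]_n) (x y : 'rV[R]_n) : R :=
  \sum_i \sum_j x ord0 i * M i j * y ord0 j.

Definition qform n (M : 'M[R]_n) (x : 'rV[R]_n) : R := mxform M x x.

Definition sqnorm n (x : 'rV[R]_n) : R := qform 1%:M x.

Lemma mxformE n (M : 'M[R]_n) x y :
  mxform M x y = \sum_j (x *m M) ord0 j * y ord0 j.
Proof.
rewrite /mxform exchange_big /=; apply: eq_bigr => j _.
by rewrite !mxE mulr_suml.
Qed.

Lemma sqnormE n (x : 'rV[R]_n) : sqnorm x = \sum_j x ord0 j ^+ 2.
Proof. by rewrite /sqnorm /qform mxformE mulmx1; apply: eq_bigr => j _. Qed.

Lemma mxformDl n (M : 'M[R]_n) x y z : mxform M (x + y) z = mxform M x z + mxform M y z.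
Proof.
rewrite !mxformE -big_split; apply: eq_bigr => j _.
by rewrite mulmxDl [(_ *m M + _) _ _]mxE mulrDl.
Qed.

Lemma mxformDr n (M : 'M[R]_n) x y z : mxform M x (y + z) = mxform M x y + mxform M x z.
Proof.
rewrite !mxformE -big_split; apply: eq_bigr => j _.
by rewrite [(y + z) _ _]mxE mulrDr.
Qed.

Lemma mxformZl n (M : 'M[R]_n) t x y : mxform M (t *: x) y = t * mxform M x y.
Proof.
rewrite !mxformE mulr_sumr; apply: eq_bigr => j _.
by rewrite -scalemxAl mxE mulrA.
Qed.

Lemma mxformZr n (M : 'M[R]_n) t x y : mxform M x (t *: y) = t * mxform M x y.
Proof.
rewrite !mxformE mulr_sumr; apply: eq_bigr => j _.
by rewrite [(t *: y) _ _]mxE mulrCA.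
Qed.

Lemma mxform_trmx n (M : 'M[R]_n) x y : mxform M^T y x = mxform M x y.
Proof.
rewrite /mxform exchange_big /=; apply: eq_bigr => i _; apply: eq_bigr => j _.
by rewrite mxE mulrC [y _ _ * _]mulrC mulrA.
Qed.

Lemma mxform_subr_scalar n (M : 'M[R]_n) a x y :
  mxform (M - a%:M) x y = mxform M x y - a * mxform 1%:M x y.
Proof.
rewrite !mxformE mulmxBr mul_mx_scalar mulmx1 mulr_sumr -sumrB.
by apply: eq_bigr => j _; rewrite !mxE mulrBl mulrA.
Qed.

Lemma qformZ n (M : 'M[R]_n) t x : qform M (t *: x) = t ^+ 2 * qform M x.
Proof. by rewrite /qform mxformZl mxformZr mulrA expr2. Qed.

Lemma qform0 n (M : 'M[R]_n) : qform M 0 = 0.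
Proof. by rewrite -(scale0r (0 : 'rV[R]_n)) qformZ expr2 !mul0r. Qed.

Lemma qform_expand n (M : 'M[R]_n) x y t : M^T = M ->
  qform M (x + t *: y) = qform M x + t * (mxform M x y *+ 2) + t ^+ 2 * qform M y.
Proof.
move=> sM; rewrite /qform mxformDl !mxformDr !mxformZl !mxformZr.
by rewrite -[mxform M y x]mxform_trmx sM mulr2n mulrDr expr2 mulrA !addrA.
Qed.

Lemma qform_eigen n (M : 'M[R]_n) v a : v *m M = a *: v -> qform M v = a * sqnorm v.
Proof.
move=> vM; rewrite /qform mxformE vM /sqnorm /qform mxformE mulmx1 mulr_sumr.
by apply: eq_bigr => j _; rewrite mxE mulrA.
Qed.

Lemma sqnorm_ge0 n (x : 'rV[R]_n) : 0 <= sqnorm x.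
Proof. by rewrite sqnormE; apply: sumr_ge0 => i _; rewrite sqr_ge0. Qed.

Lemma sqnorm_eq0 n (x : 'rV[R]_n) : (sqnorm x == 0) = (x == 0).
Proof.
apply/idP/eqP => [|->]; last by rewrite /sqnorm qform0.
rewrite sqnormE psumr_eq0 => [/allP x0|i _]; last exact: sqr_ge0.
apply/rowP => i; rewrite mxE; apply/eqP.
by rewrite -sqrf_eq0; apply: x0; rewrite mem_index_enum.
Qed.

Lemma sqnorm_gt0 n (x : 'rV[R]_n) : (0 < sqnorm x) = (x != 0).
Proof. by rewrite lt_def sqnorm_ge0 sqnorm_eq0 andbT. Qed.

Lemma continuous_qform n (M : 'M[R]_n) : continuous (qform M).
Proof.
apply: continuous_big => [[x y]|i _]; first exact: add_continuous.
apply: continuous_big => [[x y]|j _ x]; first exact: add_continuous.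
apply: (@continuousM _ _ (fun x : 'rV[R]_n => x ord0 i * M i j) (fun x => x ord0 j)).
  by apply: continuousM; [exact: coord_continuous | exact: cst_continuous].
exact: coord_continuous.
Qed.

Lemma compact_unit_sphere n : compact [set x : 'rV[R]_n | sqnorm x = 1].
Proof.
apply: (subclosed_compact _ (rV_compact (fun _ => @segment_compact _ (-1) 1))).
  apply: (@preimage_closed _ _ (qform 1%:M) [set 1]); last exact: closed_eq.
  by move=> x _; exact: continuous_qform.
move=> x /= x1 i; rewrite /= in_itv /= -ler_norml -(ler_pXn2r (n := 2)) ?nnegrE //.
rewrite expr1n real_normK ?num_real // -x1 sqnormE (bigD1 i) //= lerDl.
by apply: sumr_ge0 => j _; exact: sqr_ge0.
Qed.

Lemma qform_le0_ker n (N : 'M[R]_n) c : N^T = N ->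
  (forall x, qform N x <= 0) -> qform N c = 0 -> c *m N = 0.
Proof.
(* Along the line c + t (c N), the form is t * 2 |c N|^2 + t^2 qform N (c N). *)
move=> sN Nle0 Nc0; set u := c *m N.
have cu : mxform N c u = sqnorm u by rewrite mxformE /sqnorm /qform mxformE mulmx1.
apply/eqP; rewrite -sqnorm_eq0 eq_le sqnorm_ge0 andbT.
rewrite -(pmulrn_lle0 _ (isT : 0 < 2)%N).
apply: (lincoef_le0 (b := qform N u)) => t _.
by have := Nle0 (c + t *: u); rewrite qform_expand // Nc0 cu add0r.
Qed.

Lemma rayleigh_argmax n (M : 'M[R]_n) : (0 < n)%N ->
  exists2 c, sqnorm c = 1 & forall x, qform M x <= qform M c * sqnorm x.
Proof.
move=> n0; set S := [set x : 'rV[R]_n | sqnorm x = 1].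
have [x0 x0S] : S !=set0.
  exists (\row_i (i == Ordinal n0)%:R).
  rewrite /S /= sqnormE (bigD1 (Ordinal n0)) //=.
  rewrite big1 => [|i /negbTE ni]; first by rewrite mxE eqxx expr1n addr0.
  by rewrite mxE ni expr0n.
have [c cS cmax] := EVT_max_rV (ex_intro _ x0 x0S) (@compact_unit_sphere n)
   (continuous_subspaceT (@continuous_qform n M)).
rewrite inE in cS; exists c => // x.
have [->|x0'] := eqVneq x 0; first by rewrite /sqnorm !qform0 mulr0.
have xp : 0 < sqnorm x by rewrite sqnorm_gt0.
pose k := (Num.sqrt (sqnorm x))^-1.
have k2 : k ^+ 2 * sqnorm x = 1.
  by rewrite exprVn sqr_sqrtr ?sqnorm_ge0 // mulVf // gt_eqF.
have : qform M (k *: x) <= qform M c.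
  by apply: cmax; rewrite inE /S /= /sqnorm qformZ.
by rewrite qformZ -(ler_pM2r xp) mulrAC k2 mul1r.
Qed.

Lemma rayleigh_argmax_eigen n (M : 'M[R]_n) c : M^T = M -> sqnorm c = 1 ->
  (forall x, qform M x <= qform M c * sqnorm x) -> c *m M = qform M c *: c.
Proof.
move=> sM c1 cmax; set rho := qform M c.
have qformB x : qform (M - rho%:M) x = qform M x - rho * sqnorm x.
  exact: mxform_subr_scalar.
have : c *m (M - rho%:M) = 0.
  apply: qform_le0_ker.
  - by rewrite linearB /= tr_scalar_mx sM.
  - by move=> x; rewrite qformB subr_le0.
  - by rewrite qformB c1 mulr1 subrr.
by rewrite mulmxBr mul_mx_scalar => /eqP; rewrite subr_eq0 => /eqP.
Qed.

Lemma lambda_max_rayleigh n (M : 'M[R]_n) : (0 < n)%N -> M^T = M ->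
  (exists2 c, qform M c = lambda_max M * sqnorm c & c != 0) /\
  forall x, qform M x <= lambda_max M * sqnorm x.
Proof.
move=> n0 sM; have [c c1 cmax] := rayleigh_argmax M n0.
have c0 : c != 0 by rewrite -sqnorm_gt0 c1 ltr01.
have eig_c : eigenvalue M (qform M c).
  by apply/eigenvalueP; exists c => //; exact: rayleigh_argmax_eigen.
have ub : ubound [set a | eigenvalue M a] (qform M c).
  move=> a /eigenvalueP [v vE v0]; have := cmax v.
  by rewrite (qform_eigen vE) ler_pM2r // sqnorm_gt0.
suff -> : lambda_max M = qform M c by split => //; exists c; rewrite ?c1 ?mulr1.
have le_lc : lambda_max M <= qform M c by apply: ge_sup ub; exists (qform M c).
have le_cl : qform M c <= lambda_max M.
  by apply: sup_upper_bound => //; split; exists (qform M c).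
by apply/eqP; rewrite eq_le le_lc le_cl.
Qed.

End QuadraticForm.

Lemma mulr_le_sqrD (R : realDomainType) (a b : R) : a * b <= a ^+ 2 + b ^+ 2.
Proof.
have [ab0|ab0] := leP (a * b) 0.
  by apply: le_trans ab0 _; rewrite addr_ge0 ?sqr_ge0.
have : a * b *+ 2 <= a ^+ 2 + b ^+ 2 by rewrite -subr_ge0 addrAC -sqrrB sqr_ge0.
by apply: le_trans; rewrite mulr2n lerDl ltW.
Qed.

Section AlphaSpectralRadius.
Variables (R : realType) (alpha : R).
Hypotheses (alpha_ge0 : 0 <= alpha) (alpha_le1 : alpha <= 1).

Definition edge_term (a b : R) : R := alpha * a ^+ 2 + (1 - alpha) * (a * b).

Lemma card_adjE n (e : rel 'I_n) i :
  (#|[set j | e i j]|)%:R = \sum_j ((e i j)%:R : R).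
Proof.
(* [set j | e i j] is a classical set here, whose membership goes through asbool. *)
rewrite -sumr_const big_mkcond /=; apply: eq_bigr => j _.
by rewrite /mkset /in_mem /mem /= /in_set asboolb; case: (e i j).
Qed.

Lemma A_alphaE n (e : rel 'I_n) i j : A_alpha alpha e i j =
  alpha * ((#|[set k | e i k]|)%:R *+ (i == j)) + (1 - alpha) * (e i j)%:R.
Proof. by rewrite /A_alpha /deg_mx /adj_mx !mxE. Qed.

Lemma A_alpha_tr n (e : rel 'I_n) :
  symmetric e -> (A_alpha alpha e)^T = A_alpha alpha e.
Proof.
move=> se; apply/matrixP => i j; rewrite mxE !A_alphaE eq_sym se.
by have [->|] := eqVneq i j.
Qed.

Lemma qform_A_alpha n (e : rel 'I_n) (x : 'rV[R]_n) :
  qform (A_alpha alpha e) x =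
  \sum_i \sum_j (e i j)%:R * edge_term (x ord0 i) (x ord0 j).
Proof.
rewrite /qform /mxform; apply: eq_bigr => i _.
under eq_bigr do rewrite A_alphaE mulrDr mulrDl.
rewrite big_split /= (bigD1 i) //= big1 ?addr0 => [|j ji]; last first.
  by rewrite eq_sym (negbTE ji) mulr0n mulr0 mulr0 mul0r.
rewrite eqxx mulr1n card_adjE.
have -> : x ord0 i * (alpha * \sum_j (e i j)%:R) * x ord0 i =
    \sum_j (e i j)%:R * (alpha * x ord0 i ^+ 2).
  rewrite -mulr_suml mulrAC -expr2 mulrCA [RHS]mulrCA.
  by congr (_ * _); exact: mulrC.
rewrite -big_split /=; apply: eq_bigr => j _; rewrite /edge_term mulrDr.
by congr (_ + _); rewrite mulrAC mulrC [(1 - alpha) * _]mulrC -mulrA.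
Qed.

Lemma edge_term_le a b : edge_term a b <= a ^+ 2 + b ^+ 2.
Proof.
rewrite -[X in _ <= X]mul1r -(subrKC alpha 1) mulrDl.
apply: lerD; apply: ler_wpM2l; rewrite ?subr_ge0 //; last exact: mulr_le_sqrD.
by rewrite lerDl sqr_ge0.
Qed.

Lemma qform_A_alpha_le n (e : rel 'I_n) x :
  qform (A_alpha alpha e) x <= n%:R *+ 2 * sqnorm x.
Proof.
rewrite qform_A_alpha (@le_trans _ _
  (\sum_(i < n) \sum_(j < n) (x ord0 i ^+ 2 + x ord0 j ^+ 2))) //.
  apply: ler_sum => i _; apply: ler_sum => j _.
  by case: (e i j); rewrite ?mul1r ?edge_term_le // mul0r addr_ge0 ?sqr_ge0.
under eq_bigr do rewrite big_split /= sumr_const card_ord.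
rewrite big_split /= sumr_const card_ord sumrMnl -sqnormE.
by rewrite mulr2n mulrDl !mulr_natl.
Qed.

Lemma lam_rayleigh n (e : rel 'I_n) : (0 < n)%N -> symmetric e ->
  (exists2 c, qform (A_alpha alpha e) c = lam alpha e * sqnorm c & c != 0) /\
  forall x, qform (A_alpha alpha e) x <= lam alpha e * sqnorm x.
Proof. by move=> n0 se; apply: lambda_max_rayleigh => //; exact: A_alpha_tr. Qed.

Lemma lam_ge0 n (e : rel 'I_n) : (0 < n)%N -> symmetric e -> 0 <= lam alpha e.
Proof.
move=> n0 se; have [_ lam_ub] := lam_rayleigh n0 se.
have := lam_ub (const_mx 1); rewrite qform_A_alpha sqnormE.
under eq_bigr do under eq_bigr do rewrite !mxE /edge_term expr1n !mulr1 subrKC.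
under [X in _ <= _ * X]eq_bigr do rewrite mxE expr1n.
rewrite sumr_const card_ord mulr_natr -(pmulrn_lge0 _ n0); apply: le_trans.
by apply: sumr_ge0 => i _; apply: sumr_ge0 => j _; rewrite mulr1 ler0n.
Qed.

Lemma lam_le n (e : rel 'I_n) :
  (0 < n)%N -> symmetric e -> lam alpha e <= n%:R *+ 2.
Proof.
move=> n0 se; have [[c cE c0] _] := lam_rayleigh n0 se.
by have := qform_A_alpha_le e c; rewrite cE ler_pM2r // sqnorm_gt0.
Qed.

End AlphaSpectralRadius.

Definition ord_mod n (n0 : (0 < n)%N) (k : nat) : 'I_n := Ordinal (ltn_pmod k n0).

Section PeriodicSums.
Variables (R : pzRingType) (n : nat) (n0 : (0 < n)%N).

Lemma sum_ord_mod q (f : 'I_n -> R) :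
  \sum_(0 <= k < q * n) f (ord_mod n0 k) = q%:R * \sum_i f i.
Proof.
elim: q => [|q IH]; first by rewrite mul0n big_geq // mul0r.
rewrite mulSnr (big_cat_nat (leq0n _) (leq_addr _ _)) /= IH.
rewrite -{1}(add0n (q * n)%N) big_addn addKn big_mkord.
rewrite -[q.+1]addn1 natrD mulrDl mul1r.
congr (_ + _); apply: eq_bigr => i _; congr f; apply: val_inj => /=.
by rewrite addnC modnMDl modn_small.
Qed.

Lemma sum_ord_mod_trunc m q (f : 'I_n -> R) : (q * n <= m)%N ->
  \sum_(y < m) ((y < q * n)%N)%:R * f (ord_mod n0 y) = q%:R * \sum_i f i.
Proof.
move=> qm.
rewrite -(big_mkord xpredT (fun k => ((k < q * n)%N)%:R * f (ord_mod n0 k))).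
rewrite (big_cat_nat (leq0n _) qm) /= [X in _ + X]big_nat_cond.
rewrite [X in _ + X]big1 ?addr0 => [|k /andP[/andP[qk _] _]]; last first.
  by rewrite ltnNge qk mul0r.
rewrite -sum_ord_mod big_nat_cond [RHS]big_nat_cond.
by apply: eq_bigr => k /andP[/andP[_ ->] _]; rewrite mul1r.
Qed.

End PeriodicSums.

Section ModGraph.
Variables (n m : nat) (n0 : (0 < n)%N).

Definition mod_graph (e : rel 'I_n) : rel 'I_m :=
  fun y z => e (ord_mod n0 y) (ord_mod n0 z).

Lemma mod_graph_sym (e : rel 'I_n) : symmetric e -> symmetric (mod_graph e).
Proof. by move=> se y z; exact: se. Qed.

Lemma mod_embed_subproof (y : 'I_m) : ((y %% n) * m + y %/ n < n * m)%N.
Proof.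
have ymod := ltn_pmod y n0.
have ydiv : (y %/ n < m)%N := leq_ltn_trans (leq_div y n) (ltn_ord y).
have : ((y %% n).+1 * m <= n * m)%N by rewrite leq_mul2r ymod orbT.
rewrite mulSn; lia.
Qed.

(* Vertex y goes to copy y %/ n of the class of vertex y %% n in the blow-up. *)
Definition mod_embed (y : 'I_m) : 'I_(n * m) := Ordinal (mod_embed_subproof y).

Lemma blow_proj_mod_embed (y : 'I_m) : blow_proj (mod_embed y) = ord_mod n0 y.
Proof.
apply: val_inj => /=.
have ydiv : (y %/ n < m)%N := leq_ltn_trans (leq_div y n) (ltn_ord y).
by rewrite divnMDl ?(leq_ltn_trans _ ydiv) // (divn_small ydiv) addn0.
Qed.

Lemma mod_embed_inj : injective mod_embed.
Proof.
move=> y z /(congr1 val) /= yz.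
have ydiv : (y %/ n < m)%N := leq_ltn_trans (leq_div y n) (ltn_ord y).
have zdiv : (z %/ n < m)%N := leq_ltn_trans (leq_div z n) (ltn_ord z).
have m0 : (0 < m)%N := leq_ltn_trans (leq0n _) (ltn_ord y).
have := congr1 (divn^~ m) yz; have := congr1 (modn^~ m) yz.
rewrite /= !divnMDl // !modnMDl (divn_small ydiv) (divn_small zdiv) !addn0.
rewrite (modn_small ydiv) (modn_small zdiv) => divE modE.
by apply: val_inj; rewrite /= (divn_eq y n) (divn_eq z n) divE modE.
Qed.

Lemma inG_mod_graph (F : graph_family) (e : rel 'I_n) :
  hereditary_family F -> multiplicative_family F -> (0 < m)%N ->
  inG F e -> inG F (mod_graph e).
Proof.
move=> hF mF m0 Fe; have := hF _ _ _ mod_embed_inj _ (mF _ _ _ m0 Fe).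
congr inG; apply/funext => y; apply/funext => z.
by rewrite /blowup !blow_proj_mod_embed.
Qed.

Variables (R : realType) (alpha : R).
Hypothesis alpha_ge0 : 0 <= alpha.

Definition mod_vec q (c : 'rV[R]_n) : 'rV[R]_m :=
  \row_(y < m) (((y < q * n)%N)%:R * c ord0 (ord_mod n0 y)).

Lemma sqnorm_mod_vec q c :
  (q * n <= m)%N -> sqnorm (mod_vec q c) = q%:R * sqnorm c.
Proof.
move=> qm; rewrite !sqnormE -(sum_ord_mod_trunc n0 (fun i => c ord0 i ^+ 2) qm).
apply: eq_bigr => y _; rewrite mxE.
by case: (y < q * n)%N; rewrite ?mul1r ?mul0r ?expr0n.
Qed.

Lemma qform_mod_vec (e : rel 'I_n) q c : (q * n <= m)%N ->
  q%:R ^+ 2 * qform (A_alpha alpha e) c <=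
  qform (A_alpha alpha (mod_graph e)) (mod_vec q c).
Proof.
move=> qm; set cls := ord_mod n0.
have -> : q%:R ^+ 2 * qform (A_alpha alpha e) c =
    \sum_(y < m) ((y < q * n)%N)%:R * \sum_(z < m) ((z < q * n)%N)%:R *
      ((e (cls y) (cls z))%:R * edge_term alpha (c ord0 (cls y)) (c ord0 (cls z))).
  under eq_bigr => y _ do rewrite (sum_ord_mod_trunc n0
    (fun j => (e (cls y) j)%:R * edge_term alpha (c ord0 (cls y)) (c ord0 j)) qm).
  rewrite (sum_ord_mod_trunc n0
    (fun i => q%:R * \sum_j (e i j)%:R * edge_term alpha (c ord0 i) (c ord0 j)) qm).
  by rewrite qform_A_alpha -mulr_sumr mulrA expr2.
rewrite qform_A_alpha; apply: ler_sum => y _; rewrite mulr_sumr.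
apply: ler_sum => z _; rewrite !mxE /mod_graph -/cls.
(* Edges between the support of mod_vec and the padding still contribute
   alpha * c_y^2 >= 0 through the degree term. *)
case: (y < q * n)%N; case: (z < q * n)%N; rewrite ?mul1r ?mul0r //.
  by rewrite mulr_ge0 // /edge_term !mulr0 addr0 mulr_ge0 // sqr_ge0.
all: by rewrite /edge_term expr2 !(mul0r, mulr0, addr0).
Qed.

Lemma lam_mod_graph (e : rel 'I_n) q :
  symmetric e -> (0 < q)%N -> (q * n <= m)%N ->
  q%:R * lam alpha e <= lam alpha (mod_graph e).
Proof.
move=> se q0 qm; have m0 : (0 < m)%N by apply: leq_trans qm; rewrite muln_gt0 q0.
have [[c cE c0] _] := lam_rayleigh alpha n0 se.
have [_ lam_ub] := lam_rayleigh alpha m0 (mod_graph_sym se).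
have := le_trans (@qform_mod_vec e q c qm) (lam_ub (mod_vec q c)).
rewrite cE sqnorm_mod_vec // expr2 -mulrA mulrCA [X in _ <= X]mulrCA.
rewrite ler_pM2l ?ltr0n //.
by rewrite mulrA ler_pM2r ?sqnorm_gt0.
Qed.

End ModGraph.

Section NearlyIncreasing.
Variables (R : realType) (u : R^nat) (B C : R).
Hypothesis u_ub : forall n, (0 < n)%N -> u n <= B.
Hypothesis u_nearly_incr :
  forall n m, (0 < n)%N -> (n <= m)%N -> u n - C * n%:R / m%:R <= u m.

Let S := [set u k | k in [set k | (0 < k)%N]].

Let has_sup_S : has_sup S.
Proof. by split; [exists (u 1), 1%N | exists B => _ [k k0 <-]; exact: u_ub]. Qed.

Lemma nearly_increasing_cvg : u @ \oo --> sup S.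
Proof.
apply/cvgrPdist_le => eps eps0; have eps20 : 0 < eps / 2 by rewrite divr_gt0.
have [_ [n1 /= n10 <-] n1_sup] := sup_adherent eps20 has_sup_S.
pose x := C * n1%:R / (eps / 2).
exists (maxn (Num.truncn x).+1 n1) => // m /=; rewrite geq_max => /andP[xm n1m].
have m0 : 0 < (m%:R : R) by rewrite ltr0n (leq_trans n10).
have um : u m <= sup S.
  by apply: sup_upper_bound => //; exists m => //; exact: leq_trans n1m.
have n1m_le : u n1 - u m <= C * n1%:R / m%:R.
  by rewrite lerBlDl addrC -lerBlDl; exact: u_nearly_incr.
have n1m_lt : C * n1%:R / m%:R < eps / 2.
  rewrite ltr_pdivrMr // [X in _ < X]mulrC -ltr_pdivrMr //.
  by apply: lt_le_trans (truncnS_gt x) _; rewrite ler_nat.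
rewrite ger0_norm ?subr_ge0 // -(subrK (u n1) (sup S)) -addrA [eps]splitr.
apply: lerD; apply: ltW; first by rewrite ltrBlDr addrC -ltrBlDr.
exact: le_lt_trans n1m_le n1m_lt.
Qed.

Lemma nearly_increasing_le_lim n : (0 < n)%N -> u n <= limn u.
Proof.
move=> n0; rewrite (cvg_lim _ nearly_increasing_cvg) //.
by apply: sup_upper_bound => //; exists n.
Qed.

End NearlyIncreasing.

Section GraphFamily.
Variables (R : realType) (alpha : R) (F : graph_family).
Hypotheses (alpha_ge0 : 0 <= alpha) (alpha_le1 : alpha <= 1).
Hypotheses (hF : hereditary_family F) (mF : multiplicative_family F).
Hypothesis F_nonempty : forall n, exists e : rel 'I_n, inG F e.

Let has_sup_lam n : (0 < n)%N ->
  has_sup [set lam alpha e | e in [set e : rel 'I_n | inG F e]].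
Proof.
move=> n0; split; first by have [e Fe] := F_nonempty n; exists (lam alpha e), e.
by exists (n%:R *+ 2) => _ [e [[_ se] _] <-]; exact: lam_le.
Qed.

Lemma lam_le_lamF n (e : rel 'I_n) :
  (0 < n)%N -> inG F e -> lam alpha e <= lamF F alpha n.
Proof. by move=> n0 Fe; apply: sup_upper_bound; [exact: has_sup_lam | exists e]. Qed.

Lemma lamF_ge0 n : (0 < n)%N -> 0 <= lamF F alpha n.
Proof.
move=> n0; have [e Fe] := F_nonempty n; apply: le_trans (lam_le_lamF n0 Fe).
by case: Fe => [[_ se] _]; exact: lam_ge0.
Qed.

Lemma lamF_le n : (0 < n)%N -> lamF F alpha n <= n%:R *+ 2.
Proof.
move=> n0; apply: ge_sup; first by case: (has_sup_lam n0).
by move=> _ [e [[_ se] _] <-]; exact: lam_le.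
Qed.

Lemma lamF_mul n m q : (0 < n)%N -> (0 < q)%N -> (q * n <= m)%N ->
  q%:R * lamF F alpha n <= lamF F alpha m.
Proof.
move=> n0 q0 qm; have m0 : (0 < m)%N by apply: leq_trans qm; rewrite muln_gt0 q0.
have q0R : 0 < (q%:R : R) by rewrite ltr0n.
rewrite mulrC -ler_pdivlMr //; apply: ge_sup; first by case: (has_sup_lam n0).
move=> _ [e Fe <-]; rewrite ler_pdivlMr // mulrC.
have [[_ se] _] := Fe.
apply: le_trans (lam_mod_graph n0 alpha_ge0 se q0 qm) _.
exact: lam_le_lamF m0 (inG_mod_graph n0 hF mF m0 Fe).
Qed.

Lemma lamF_div_le2 n : (0 < n)%N -> lamF F alpha n / n%:R <= 2.
Proof.
by move=> n0; rewrite ler_pdivrMr ?ltr0n // mulr_natl; exact: lamF_le.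
Qed.

Lemma lamF_div_nearly_increasing n m : (0 < n)%N -> (n <= m)%N ->
  lamF F alpha n / n%:R - 2 * n%:R / m%:R <= lamF F alpha m / m%:R.
Proof.
move=> n0 nm; have m0 : (0 < m)%N := leq_trans n0 nm.
set u := lamF F alpha n / n%:R; set q := (m %/ n)%N.
have q0 : (0 < q)%N by rewrite divn_gt0.
have qm : (q * n <= m)%N by rewrite leq_divM.
have mq : (m - n <= q * n)%N by have := divn_eq m n; have := ltn_pmod m n0; lia.
have u0 : 0 <= u by rewrite divr_ge0 ?lamF_ge0 ?ler0n.
have n0R : (n%:R : R) != 0 by rewrite pnatr_eq0 -lt0n.
have m0R : 0 < (m%:R : R) by rewrite ltr0n.
have lamF_m : u * (m - n)%:R <= lamF F alpha m.
  apply: le_trans (lamF_mul n0 q0 qm).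
  rewrite -[lamF F alpha n](divfK n0R) -/u mulrCA -natrM.
  by rewrite ler_wpM2l // ler_nat.
rewrite ler_pdivlMr // mulrBl divfK ?lt0r_neq0 //.
apply: le_trans lamF_m; rewrite natrB // mulrBr lerB //.
by rewrite ler_wpM2r ?ler0n // lamF_div_le2.
Qed.

End GraphFamily.

Unset Implicit Arguments. Set Strict Implicit.

Theorem lemma5p7 (R : realType) (F : graph_family) (r : nat) (alpha : R) :
  hereditary_family F -> multiplicative_family F ->
  (forall n : nat, exists e : rel 'I_n, inG F e) ->
  (2 <= r)%N -> 0 <= alpha -> alpha <= 1 - r%:R^-1 ->
  (exists N : nat, forall n : nat, (N <= n)%N ->
     (1 - r%:R^-1) * n%:R - (1 - r%:R^-1) < lamF F alpha n) ->
  cvgn (fun n : nat => lamF F alpha n / n%:R) /\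
  (forall (n : nat) (e : rel 'I_n), (1 <= n)%N -> inG F e ->
     lam alpha e <= pi_alpha F alpha * n%:R).
Proof.
move=> hF mF F_nonempty _ alpha_ge0 alpha_le _.
have alpha_le1 : alpha <= 1 by apply: le_trans alpha_le _; rewrite gerBl invr_ge0.
have ub := lamF_div_le2 alpha_ge0 alpha_le1 F_nonempty.
have incr := lamF_div_nearly_increasing alpha_ge0 alpha_le1 hF mF F_nonempty.
split; first exact: cvgP (nearly_increasing_cvg ub incr).
move=> n e n0 Fe; rewrite -ler_pdivrMr ?ltr0n //.
apply: le_trans (nearly_increasing_le_lim ub incr n0).
by rewrite ler_wpM2r ?invr_ge0 ?ler0n // lam_le_lamF.
Qed.
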